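(* (a) For any finite $d$--regular graph $G$ there exists a sequence of graphs $(G_i)_{i\geq0}$ with $G_0=G$, $G_i$ a $2$-lift of $G_{i-1}$ for $i\geq1$, such that $(G_i)$ Benjamini--Schramm converges to the infinite $d$--regular tree $\mathbb{T}_d$. (b) For any finite $(a,b)$--biregular bipartite graph $G$ there exists a sequence of graphs $(G_i)_{i\geq0}$ with $G_0=G$, $G_i$ a $2$-lift of $G_{i-1}$ for $i\geq1$, such that $(G_i)$ Benjamini--Schramm converges to the infinite $(a,b)$--biregular tree $\mathbb{T}_{a,b}$.
   Context: A graph $H$ is a $2$-lift of $G$ if $V(H)=V(G)\times\{0,1\}$ and for every edge $(u,v)\in E(G)$ exactly one of: $((u,0),(v,0)),((u,1),(v,1))\in E(H)$, or $((u,0),(v,1)),((u,1),(v,0))\in E(H)$; non-edges of $G$ give no edges in $H$. An $(a,b)$--biregular bipartite graph has bipartition $(A,B)$ with all vertices of $A$ of degree $a$ and all of $B$ of degree $b$. A sequence of finite $d$--regular graphs $(G_i)$ Benjamini--Schramm converges to $\mathbb{T}_d$ if for every $r\geq1$ the proportion of vertices $v$ of $G_i$ whose radius-$r$ ball, as a rooted graph, is isomorphic to the radius-$r$ ball of $\mathbb{T}_d$ tends to $1$. A sequence of finite $(a,b)$--biregular bipartite graphs Benjamini--Schramm converges to $\mathbb{T}_{a,b}$ (the random rooted tree which is $\mathbb{T}_{a,b}$ rooted at a vertex of degree $b$ with probability $\frac{a}{a+b}$ and at a vertex of degree $a$ with probability $\frac{b}{a+b}$) if for every $r\geq1$ the proportion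 of vertices $v$ of $G_i$ whose radius-$r$ ball is isomorphic, as a rooted graph, to the radius-$r$ ball of $\mathbb{T}_{a,b}$ around a vertex of the same degree as $v$ tends to $1$. *)

From HB Require Import structures.
From mathcomp Require Import all_boot all_order all_algebra.
From mathcomp Require Import boolp.
Set Implicit Arguments. Unset Strict Implicit. Unset Printing Implicit Defensive.
Import Order.TTheory GRing.Theory Num.Theory.

Definition simple_graph (T : finType) (e : rel T) : Prop :=
  symmetric e /\ irreflexive e.

Definition deg (T : finType) (e : rel T) (v : T) : nat := #|[set w | e v w]|.

Definition regular (T : finType) (e : rel T) (d : nat) : Prop :=
  forall v, deg e v = d.

Definition biregular_bipartite (T : finType) (e : rel T) (a b : nat) : Prop :=
  exists A : {set T},
    (forall u v, e u v -> (u \in A) != (v \in A)) /\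
    (forall v, v \in A -> deg e v = a) /\
    (forall v, v \notin A -> deg e v = b).

(* 2-lift: V(H) = V(G) x {0,1}; over each edge (u,v) of G, H contains exactly
   the "parallel" pair ((u,0),(v,0)),((u,1),(v,1)) or exactly the "crossed"
   pair ((u,0),(v,1)),((u,1),(v,0)); non-edges of G give no edges of H. *)
Definition is_2lift (T : finType) (e : rel T) (h : rel (T * bool)) : Prop :=
  simple_graph h /\
  forall u v : T,
    if e u v then
      (forall x y : bool, h (u, x) (v, y) = (x == y)) \/
      (forall x y : bool, h (u, x) (v, y) = (x != y))
    else forall x y : bool, h (u, x) (v, y) = false.

Fixpoint liftT (T : finType) (n : nat) : finType :=
  match n with
  | 0 => T
  | n.+1 => (liftT T n * bool)%type
  end.

Fixpoint ball (T : finType) (e : rel T) (r : nat) (v : T) : {set T} :=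
  match r with
  | 0 => [set v]
  | r.+1 => ball e r v :|: \bigcup_(u in ball e r v) [set w | e u w]
  end.

(* Spherically symmetric rooted trees: a vertex at depth k has c k children.
   Vertices are words s : seq nat with s_k < c k; the root is [::], and the
   edges are between s and rcons s i. *)
Definition stree_vertex (c : nat -> nat) (s : seq nat) : bool :=
  all (fun k => nth 0 s k < c k) (iota 0 (size s)).

Definition stree_adj (s t : seq nat) : bool :=
  ((size t == (size s).+1) && (s == take (size s) t)) ||
  ((size s == (size t).+1) && (t == take (size t) s)).

Definition stree_ball (c : nat -> nat) (r : nat) (s : seq nat) : bool :=
  (size s <= r) && stree_vertex c s.

Definition ball_iso_tree (T : finType) (e : rel T) (r : nat) (v : T)
    (c : nat -> nat) : Prop :=
  exists f : T -> seq nat,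
    [/\ f v = [::],
        {in ball e r v &, injective f},
        (forall x, x \in ball e r v -> stree_ball c r (f x)),
        (forall s, stree_ball c r s -> exists2 x, x \in ball e r v & f x = s)
      & {in ball e r v &, forall x y, e x y = stree_adj (f x) (f y)}].

Definition Td_children (d : nat) (k : nat) : nat := if k == 0 then d else d.-1.

(* Infinite (a,b)-biregular tree T_{a,b} rooted at a vertex of degree a
   (children counts a, b-1, a-1, b-1, ...); swap a and b for the other root. *)
Definition Tab_children (a b : nat) (k : nat) : nat :=
  if k == 0 then a else if odd k then b.-1 else a.-1.

Local Open Scope ring_scope.

Definition proportion (T : finType) (P : pred T) : rat :=
  #|[set v | P v]|%:R / #|T|%:R.

Definition tends_to_one (p : nat -> rat) : Prop :=
  forall eps : rat, 0 < eps -> exists N : nat, forall i : nat,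
    (N <= i)%N -> `|p i - 1| < eps.

Definition BS_conv_Td (V : nat -> finType) (G : forall i, rel (V i))
    (d : nat) : Prop :=
  forall r : nat, (1 <= r)%N ->
    tends_to_one (fun i =>
      proportion (fun v : V i => `[< ball_iso_tree (G i) r v (Td_children d) >])).

Definition BS_conv_Tab (V : nat -> finType) (G : forall i, rel (V i))
    (a b : nat) : Prop :=
  forall r : nat, (1 <= r)%N ->
    tends_to_one (fun i =>
      proportion (fun v : V i =>
        `[< (deg (G i) v = a /\ ball_iso_tree (G i) r v (Tab_children a b)) \/
            (deg (G i) v = b /\ ball_iso_tree (G i) r v (Tab_children b a)) >])).

From HB Require Import structures.
From mathcomp Require Import all_boot all_order all_algebra.
From mathcomp Require Import boolp.
From mathcomp Require Import zify ring.

(* A vertex is treelike up to R when every non-backtracking walk of length at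
   most R from it is self-avoiding; for R = 2r + 2 its radius-r ball is then
   the radius-r ball of the tree whose branching numbers are the degrees along
   non-backtracking walks. A vertex that is not treelike starts a lasso, a
   non-backtracking walk whose first repetition happens at its last step.

   Lift a graph along a signing of its edges. A lasso of the lift projects
   either onto a lasso of the base whose cycle has even sign, or onto a walk
   extending a shorter lasso of the base. Each lasso of the base has even sign
   for exactly half of the signings, and a lasso of length j extends to at most
   D^(m-j) walks of length m. For the potential sum_m Q^(K-m) L_m, with L_m the
   number of lassos of length m and Q = 4(D+1), the best signing therefore
   multiplies the potential by at most 5/3 (after the renormalisation coming
   from K = #vertices + 1). So the i-th lift has O((5/3)^i) non-treelike
   vertices among its 2^i |T| vertices. *)

Set Implicit Arguments. Unset Strict Implicit. Unset Printing Implicit Defensive.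

(** * Non-backtracking walks and tree-like balls *)

Definition walk (V : Type) (g : rel V) (u : nat -> V) (k : nat) : Prop :=
  forall i, i < k -> g (u i) (u i.+1).

Definition nonbacktracking (V : Type) (u : nat -> V) (k : nat) : Prop :=
  forall i, i.+2 <= k -> u i <> u i.+2.

Definition self_avoiding (V : Type) (u : nat -> V) (k : nat) : Prop :=
  forall i j, i <= k -> j <= k -> u i = u j -> i = j.

Definition treelike (V : Type) (g : rel V) (v : V) (R : nat) : Prop :=
  forall u k, k <= R -> u 0 = v -> walk g u k -> nonbacktracking u k ->
  self_avoiding u k.

Lemma take_rcons_size (T : Type) (s : seq T) x : take (size s) (rcons s x) = s.
Proof. by rewrite -cats1 take_size_cat. Qed.

Lemma stree_vertexP c s :
  stree_vertex c s <-> forall k, k < size s -> nth 0 s k < c k.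
Proof.
split=> [/allP H k hk|H]; first by apply: H; rewrite mem_iota.
by apply/allP=> k; rewrite mem_iota => /andP [_]; apply: H.
Qed.

Lemma stree_vertex_rcons c s i :
  stree_vertex c (rcons s i) <-> stree_vertex c s /\ i < c (size s).
Proof.
rewrite !stree_vertexP size_rcons; split=> [H|[H1 H2] k hk].
  split=> [k hk|]; last by have := H (size s); rewrite nth_rcons ltnn eqxx; apply.
  by have := H k; rewrite nth_rcons hk; apply; lia.
rewrite nth_rcons; case: (ltngtP k (size s)) => h; [exact: H1|lia|by rewrite h].
Qed.

Lemma stree_adjP s t :
  stree_adj s t <-> (exists i, t = rcons s i) \/ (exists i, s = rcons t i).
Proof.
have half (x y : seq nat) :
    (size y == (size x).+1) && (x == take (size x) y) <-> exists i, y = rcons x i.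
  split=> [|[i ->]]; last by rewrite size_rcons eqxx take_rcons_size eqxx.
  case/lastP: y => [//|y j]; rewrite size_rcons eqSS => /andP [/eqP <- /eqP ->].
  by exists j; rewrite take_rcons_size.
by rewrite /stree_adj; split=> [/orP [/half|/half]|[/half|/half] ->]; auto; rewrite orbT.
Qed.

Section AddressTree.
Variables (V : finType) (g : rel V).
Hypotheses (gs : symmetric g) (gi : irreflexive g).
Variable v : V.

(* An address s : seq nat names a non-backtracking walk from v, each letter
   choosing among the successors of the current directed edge
   (previous, current), just as the vertices of [stree_ball] are words. The
   start is the loop (v, v), whose successors are all the neighbours of v since
   g is irreflexive. *)
Definition succs (p : V * V) : seq V := enum [set y | g p.2 y & y != p.1].
Definition step (p : V * V) (i : nat) : V * V := (p.2, nth p.2 (succs p) i).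
Definition trace (s : seq nat) : V * V := foldl step (v, v) s.
Definition endpoint (s : seq nat) : V := (trace s).2.

Definition valid_address (s : seq nat) : Prop :=
  forall k, k < size s -> nth 0 s k < size (succs (trace (take k s))).

Definition address_walk (s : seq nat) (k : nat) : V := endpoint (take k s).

Lemma mem_succs p y : (y \in succs p) = g p.2 y && (y != p.1).
Proof. by rewrite mem_enum inE. Qed.

Lemma trace_rcons s i : trace (rcons s i) = step (trace s) i.
Proof. by rewrite /trace foldl_rcons. Qed.

Lemma trace_fst_rcons s i : (trace (rcons s i)).1 = endpoint s.
Proof. by rewrite trace_rcons. Qed.

Lemma endpoint_rcons s i : endpoint (rcons s i) = nth (endpoint s) (succs (trace s)) i.
Proof. by rewrite /endpoint trace_rcons. Qed.

Lemma valid_address_nil : valid_address [::].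
Proof. by []. Qed.

Lemma valid_address_rcons s i :
  valid_address (rcons s i) <-> valid_address s /\ i < size (succs (trace s)).
Proof.
split=> [H|[H1 H2] k].
- split=> [k hk|]; last by have := H (size s); rewrite size_rcons nth_rcons ltnn eqxx
    take_rcons_size; apply.
  have := H k; rewrite size_rcons nth_rcons hk -cats1 takel_cat; last exact: ltnW.
  by apply; apply: ltnW.
- rewrite size_rcons ltnS leq_eqVlt => /orP [/eqP ->|hk].
  + by rewrite nth_rcons ltnn eqxx take_rcons_size.
  + by rewrite nth_rcons hk -cats1 takel_cat; [apply: H1|apply: ltnW].
Qed.

Lemma valid_address_take s k : valid_address s -> valid_address (take k s).
Proof.
move=> H j; rewrite size_take => hj.
have [hjs hjk] : j < size s /\ j < k by move: hj; case: (ltnP k (size s)) => h1 h2; lia.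
rewrite nth_take // take_takel; [exact: H|exact: ltnW].
Qed.

Lemma endpoint_rcons_succs s i :
  valid_address (rcons s i) -> endpoint (rcons s i) \in succs (trace s).
Proof. by case/valid_address_rcons=> _ h; rewrite endpoint_rcons mem_nth. Qed.

Lemma trace_edge s : valid_address s -> s <> [::] -> g (trace s).1 (trace s).2.
Proof.
case/lastP: s => [//|s i] H _.
have := endpoint_rcons_succs H; rewrite mem_succs => /andP [h _].
by rewrite trace_fst_rcons.
Qed.

Lemma endpoint_rcons_neq s i :
  valid_address (rcons s i) -> endpoint (rcons s i) != (trace s).1.
Proof. by move/endpoint_rcons_succs; rewrite mem_succs => /andP []. Qed.

Lemma address_walk0 s : address_walk s 0 = v.
Proof. by rewrite /address_walk take0. Qed.

Lemma address_walk_size s : address_walk s (size s) = endpoint s.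
Proof. by rewrite /address_walk take_size. Qed.

Lemma address_walk_rcons_size s i : address_walk (rcons s i) (size s) = endpoint s.
Proof. by rewrite /address_walk take_rcons_size. Qed.

Lemma address_walkS s k : k < size s ->
  address_walk s k.+1 = endpoint (rcons (take k s) (nth 0 s k)).
Proof. by move=> hk; rewrite /address_walk (take_nth 0 hk). Qed.

Lemma address_walkP s : valid_address s ->
  walk g (address_walk s) (size s) /\ nonbacktracking (address_walk s) (size s).
Proof.
move=> H; split=> i hi; rewrite (address_walkS hi).
- have Hr : valid_address (rcons (take i s) (nth 0 s i)).
    by rewrite -(take_nth 0 hi); exact: valid_address_take.
  by have := trace_edge Hr; rewrite trace_fst_rcons; apply; case: (take i s).
- have hi1 : i < size s by lia.
  have Hr : valid_address (rcons (take i.+1 s) (nth 0 s i.+1)).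
    by rewrite -(take_nth 0 hi); exact: valid_address_take.
  have := endpoint_rcons_neq Hr; rewrite (take_nth 0 hi1) trace_fst_rcons => /eqP h1 h2.
  by apply: h1; rewrite -h2.
Qed.

Lemma size_succs s : valid_address s ->
  size (succs (trace s)) = deg g (endpoint s) - (s != [::]).
Proof.
rewrite /succs -cardE /deg.
case/lastP: s => [|s i] H.
  rewrite /= subn0; apply: eq_card => y; rewrite !inE.
  by case: (eqVneq y v) => [->|]; rewrite ?gi ?andbT.
have he : g (trace (rcons s i)).1 (trace (rcons s i)).2 by apply: trace_edge => //; case: (s).
have -> : (rcons s i != [::]) = true by case: (s).
rewrite (cardsD1 (trace (rcons s i)).1 [set y | g (endpoint (rcons s i)) y]) inE /endpoint.
by rewrite gs he add1n subn1 /=; apply: eq_card => y; rewrite !inE andbC.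
Qed.

Lemma endpoint_parity (A : {set V}) :
  (forall u w, g u w -> (u \in A) != (w \in A)) ->
  forall s, valid_address s -> (endpoint s \in A) = (v \in A) (+) odd (size s).
Proof.
move=> hA; elim/last_ind => [|s i IH] H; first by rewrite /= addbF.
case/valid_address_rcons: (H) => H1 _.
have hne : rcons s i <> [::] by case: (s).
have := trace_edge H hne; rewrite trace_fst_rcons => /hA.
rewrite size_rcons /= IH //.
by case: (endpoint (rcons s i) \in A); case: (v \in A); case: (odd (size s)).
Qed.

Lemma size_succs_regular d s : regular g d -> valid_address s ->
  size (succs (trace s)) = Td_children d (size s).
Proof.
move=> hr hs; rewrite size_succs // hr /Td_children.
by case: s hs => [|k s] _; rewrite ?subn0 ?subn1.
Qed.

Lemma size_succs_biregular (A : {set V}) a b s :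
  (forall u w, g u w -> (u \in A) != (w \in A)) ->
  (forall x, x \in A -> deg g x = a) -> (forall x, x \notin A -> deg g x = b) ->
  v \in A -> valid_address s -> size (succs (trace s)) = Tab_children a b (size s).
Proof.
move=> hA degA degB hv hs; rewrite size_succs //.
have := endpoint_parity hA hs; rewrite hv /Tab_children.
case: s hs => [|k s] _ /=; first by move=> /degA ->; rewrite subn0.
rewrite subn1; case: (odd (size s)) => /= hp; first by rewrite degA.
by rewrite degB ?hp.
Qed.

(* Go out along the first address and back along the second; there is no
   backtracking at the turn since the two walks arrive from different vertices. *)
Lemma address_collision_cycle s t i j :
  valid_address (rcons s i) -> valid_address (rcons t j) ->
  endpoint s != endpoint t -> endpoint (rcons s i) = endpoint (rcons t j) ->
  let n := (size s).+1 + (size t).+1 in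
  exists u, [/\ u 0 = v, u n = v, walk g u n & nonbacktracking u n].
Proof.
move=> Hs Ht hab hp n; set a := size s; set b := size t.
have [hws hns] := address_walkP Hs; have [hwt hnt] := address_walkP Ht.
move: hws hns hwt hnt; rewrite !size_rcons -/a -/b => hws hns hwt hnt.
have wsa : address_walk (rcons s i) a.+1 = endpoint (rcons s i).
  by rewrite -address_walk_size size_rcons.
have wtb : address_walk (rcons t j) b.+1 = endpoint (rcons t j).
  by rewrite -address_walk_size size_rcons.
have wsa1 := address_walk_rcons_size s i; have wtb1 := address_walk_rcons_size t j.
rewrite -/a in wsa1; rewrite -/b in wtb1.
pose u k := if k < a.+1 then address_walk (rcons s i) k
            else address_walk (rcons t j) (n - k).
exists u; split.
- by rewrite /u /= address_walk0.
- by rewrite /u ltnNge leq_addr /= subnn address_walk0.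
- move=> k hk; rewrite /u; case: (ltngtP k.+1 a.+1) => hk1.
  + apply: hws; lia.
  + rewrite gs; have -> : n - k = (n - k.+1).+1 by lia.
    apply: hwt; lia.
  + have -> : k = a by lia.
    have -> : n - a.+1 = b.+1 by lia.
    rewrite wtb -hp -wsa; apply: hws; lia.
- move=> k hk; rewrite /u; case: (ltngtP k.+2 a.+1) => hk1.
  + have -> : (k < a.+1) = true by lia.
    apply: hns; lia.
  + case: (ltnP k a.+1) => hk2.
    * have ek : k = a by lia.
      subst k; have -> : n - a.+2 = b by lia.
      by rewrite wsa1 wtb1; apply/eqP.
    * have -> : n - k = (n - k.+2).+2 by lia.
      move=> h; apply: (hnt (n - k.+2)); first lia.
      by rewrite h.
  + have -> : (k < a.+1) = true by lia.
    have -> : n - k.+2 = b.+1 by lia.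
    rewrite wtb -hp -wsa -hk1; apply: hns; lia.
Qed.

Section Treelike.
Variable R : nat.
Hypothesis tl : treelike g v R.

Lemma treelike_endpoint_root t :
  valid_address t -> size t <= R -> endpoint t = v -> t = [::].
Proof.
move=> H ht hp; case: (address_walkP H) => hw hn.
have := tl ht (address_walk0 t) hw hn (leq0n _) (leqnn _).
by rewrite address_walk0 address_walk_size hp => /(_ erefl) /esym /size0nil.
Qed.

Lemma treelike_endpoint_inj s t : valid_address s -> valid_address t ->
  size s + size t <= R -> endpoint s = endpoint t -> s = t.
Proof.
elim/last_ind: s t => [|s i IH] t Hs Ht hsz hp.
  by apply/esym; apply: treelike_endpoint_root => //; rewrite -hp.
case/lastP: t Ht hsz hp => [|t j] Ht hsz hp.
  by apply: treelike_endpoint_root => //; move: hsz; rewrite addn0.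
case/valid_address_rcons: (Hs) => Hs1 hi; case/valid_address_rcons: (Ht) => Ht1 hj.
move: hsz; rewrite !size_rcons => hsz.
have [hst|hst] := eqVneq (endpoint s) (endpoint t).
  have est : s = t by apply: IH => //; lia.
  subst t; congr rcons; move: hp; rewrite !endpoint_rcons => /eqP.
  by rewrite nth_uniq ?enum_uniq // => /eqP.
have [u [u0 un hw hn]] := address_collision_cycle Hs Ht hst hp.
by have := tl hsz u0 hw hn (leq0n _) (leqnn _); rewrite u0 un => /(_ erefl).
Qed.

End Treelike.

Lemma ball_endpointP k x :
  x \in ball g k v <-> exists s, [/\ valid_address s, size s <= k & endpoint s = x].
Proof.
elim: k x => [|k IH] x /=.
  rewrite inE; split=> [/eqP ->|[s [_]]]; first by exists [::].
  by rewrite leqn0 => /nilP -> <-.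
rewrite in_setU; split.
- case/orP=> [/IH [s [h1 h2 h3]]|/bigcupP [w /IH [s [h1 h2 h3]]]].
    by exists s; split => //; lia.
  rewrite inE => hwx; have [hx|hx] := eqVneq x (trace s).1.
    case/lastP: s h1 h2 h3 hx => [|s j] h1 h2 h3 hx; first by move: hwx; rewrite -h3 hx gi.
    exists s; case/valid_address_rcons: h1 => h1 _; split => //.
      by move: h2; rewrite size_rcons; lia.
    by rewrite hx trace_fst_rcons.
  have hxs : x \in succs (trace s) by rewrite mem_succs hx andbT [(trace s).2]h3.
  exists (rcons s (index x (succs (trace s)))); split.
  + by apply/valid_address_rcons; split => //; rewrite index_mem.
  + by rewrite size_rcons.
  + by rewrite endpoint_rcons nth_index.
- case=> s [h1 h2 h3]; have [hk|hk] := leqP (size s) k.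
    by apply/orP; left; apply/IH; exists s.
  apply/orP; right; case/lastP: s h1 h2 h3 hk => [|s j] h1 h2 h3 hk //.
  case/valid_address_rcons: (h1) => h1' _.
  apply/bigcupP; exists (endpoint s).
    by apply/IH; exists s; split => //; move: h2; rewrite size_rcons.
  by rewrite inE -h3 -(trace_fst_rcons s j); apply: trace_edge => //; case: (s).
Qed.

Section BallIso.
Variables (r : nat) (c : nat -> nat).
Hypothesis succs_count : forall s, valid_address s -> size (succs (trace s)) = c (size s).
Hypothesis tl : treelike g v (r.+1 + r.+1).

Lemma stree_vertex_address s : stree_vertex c s <-> valid_address s.
Proof.
elim/last_ind: s => [|s i IH]; first by split => // _; exact: valid_address_nil.
rewrite stree_vertex_rcons valid_address_rcons; split=> [[/IH h1 h2]|[h1 h2]].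
  by split => //; rewrite succs_count.
by split; [exact/IH|rewrite -succs_count].
Qed.

Lemma stree_ball_address s : stree_ball c r s <-> valid_address s /\ size s <= r.
Proof.
rewrite /stree_ball; split=> [/andP [h1 /stree_vertex_address h2]|[h1 h2]] //.
by rewrite h2; apply/stree_vertex_address.
Qed.

Definition address_of (x : V) : seq nat :=
  match pselect (exists s, [/\ valid_address s, size s <= r & endpoint s = x]) with
  | left h => sval (cid h)
  | right _ => [::]
  end.

Lemma address_ofP x : x \in ball g r v ->
  [/\ valid_address (address_of x), size (address_of x) <= r
    & endpoint (address_of x) = x].
Proof.
move/ball_endpointP=> h; rewrite /address_of; case: pselect => [h'|//].
exact: (svalP (cid h')).
Qed.

Lemma address_of_endpoint s :
  valid_address s -> size s <= r -> address_of (endpoint s) = s.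
Proof.
move=> h1 h2.
have [|h3 h4 h5] := @address_ofP (endpoint s); first by apply/ball_endpointP; exists s.
by apply: (treelike_endpoint_inj tl) => //; lia.
Qed.

Lemma address_of_adj x y : x \in ball g r v -> y \in ball g r v ->
  g x y = stree_adj (address_of x) (address_of y).
Proof.
move=> hx hy; case: (address_ofP hx) (address_ofP hy) => hs1 hs2 hs3 [ht1 ht2 ht3].
set s := address_of x in hs1 hs2 hs3 *; set t := address_of y in ht1 ht2 ht3 *.
apply/idP/idP=> [hxy|/stree_adjP [[i ht]|[i hs]]].
- apply/stree_adjP; have [hy1|hy1] := eqVneq y (trace s).1.
    case/lastP: s hs1 hs2 hs3 hy1 => [|s j] hs1 hs2 hs3 hy1.
      by move: hxy; rewrite -hs3 hy1 /= gi.
    right; exists j; congr rcons; case/valid_address_rcons: hs1 => hs1 _.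
    apply: (treelike_endpoint_inj tl) => //; first by move: hs2; rewrite size_rcons; lia.
    by rewrite ht3 hy1 trace_fst_rcons.
  have hys : y \in succs (trace s) by rewrite mem_succs hy1 andbT [(trace s).2]hs3.
  left; exists (index y (succs (trace s))).
  have hr : valid_address (rcons s (index y (succs (trace s)))).
    by apply/valid_address_rcons; split => //; rewrite index_mem.
  apply: (treelike_endpoint_inj tl) => //; first by rewrite size_rcons; lia.
  by rewrite ht3 endpoint_rcons nth_index.
- rewrite -hs3 -ht3 ht -(trace_fst_rcons s i); apply: trace_edge; first by rewrite -ht.
  by case: (s).
- rewrite gs -hs3 -ht3 hs -(trace_fst_rcons t i); apply: trace_edge; first by rewrite -hs.
  by case: (t).
Qed.

Lemma treelike_ball_iso_tree : ball_iso_tree g r v c.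
Proof.
exists address_of; split.
- by rewrite -[v]/(endpoint [::]) address_of_endpoint.
- move=> x y hx hy hf.
  by case: (address_ofP hx) => _ _ <-; case: (address_ofP hy) => _ _ <-; rewrite hf.
- by move=> x hx; case: (address_ofP hx) => h1 h2 _; exact/stree_ball_address.
- move=> s /stree_ball_address [h1 h2]; exists (endpoint s).
    by apply/ball_endpointP; exists s.
  exact: address_of_endpoint.
- exact: address_of_adj.
Qed.

End BallIso.

End AddressTree.

(** * Lassos *)

Lemma card_sum_mem (T : finType) (A : {set T}) : #|A| = \sum_x (x \in A).
Proof. by rewrite -sum1_card big_mkcond. Qed.

Lemma card_le_sum_cover (T : finType) (B : {set T}) N (A : nat -> {set T}) :
  (forall x, x \in B -> exists2 m, m < N & x \in A m) -> #|B| <= \sum_(m < N) #|A m|.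
Proof.
move=> H; rewrite card_sum_mem (eq_bigr (fun m : 'I_N => \sum_x (x \in A m))); last first.
  by move=> m _; rewrite card_sum_mem.
rewrite exchange_big /=; apply: leq_sum => x _.
case: (boolP (x \in B)) => hx //; case: (H x hx) => m hm hA.
by rewrite (bigD1 (Ordinal hm)) //= hA.
Qed.

Definition tfun (T : Type) m (t : m.+1.-tuple T) (i : nat) : T := nth (thead t) t i.

Lemma tfun_mktuple (T : Type) m (u : nat -> T) i :
  i <= m -> tfun [tuple u i | i < m.+1] i = u i.
Proof. by move=> hi; rewrite /tfun -[i]/(nat_of_ord (Ordinal (hi : i < m.+1))) nth_mktuple. Qed.

Lemma tnth_tfun (T : Type) m (t : m.+1.-tuple T) (j : 'I_m.+1) : tnth t j = tfun t j.
Proof. by rewrite /tfun (tnth_nth (thead t)). Qed.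

Definition wsum (Q : nat) (L : nat -> nat) (K : nat) : nat :=
  \sum_(0 <= m < K) Q ^ (K - m) * L m.

Lemma wsumS Q L K : wsum Q L K.+1 = Q * (wsum Q L K + L K).
Proof.
rewrite /wsum big_nat_recr //= subSnn expn1 mulnDr; congr (_ + _); rewrite big_distrr /=.
by apply: eq_big_nat => m hm; rewrite subSn ?expnS ?mulnA //; lia.
Qed.

Section Lassos.
Variables (V : finType) (g : rel V).

Definition lasso (u : nat -> V) (m : nat) : Prop :=
  [/\ walk g u m, nonbacktracking u m, self_avoiding u m.-1 & ~ self_avoiding u m].

Definition lassos m := [set t : m.+1.-tuple V | `[< lasso (tfun t) m >]].
Definition nlassos m := #|lassos m|.

Lemma eq_lasso u u' m : (forall i, i <= m -> u i = u' i) -> lasso u m -> lasso u' m.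
Proof.
move=> E [h1 h2 h3 h4]; split.
- by move=> i hi; rewrite -!E; [exact: h1|lia|lia].
- by move=> i hi; rewrite -!E; [exact: h2|lia|lia].
- by move=> i j hi hj; rewrite -!E; [exact: h3|lia|lia].
- by move=> h; apply: h4 => i j hi hj; rewrite !E //; exact: h.
Qed.

Lemma exists_lasso u k : walk g u k -> nonbacktracking u k -> ~ self_avoiding u k ->
  exists2 j, j <= k & lasso u j.
Proof.
move=> hw hn hns.
have exP : exists n, `[< ~ self_avoiding u n >] by exists k; apply/asboolP.
case: (ex_minnP exP) => m /asboolP hm hmin.
have hmk : m <= k by apply: hmin; apply/asboolP.
have hsa : self_avoiding u m.-1.
  case: m hm hmin {hmk} => [hm _|m _ hmin]; first by exfalso; apply: hm => i j; lia.
  case: (pselect (self_avoiding u m)) => // h.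
  by have := hmin m (introT (asboolP _) h); lia.
exists m => //; split => // i hi; [apply: hw|apply: hn]; lia.
Qed.

Lemma lasso_cycle_start u m : lasso u m -> exists2 i, i < m & u i = u m.
Proof.
case=> _ _ hsa hnsa; case: (pselect (exists2 i, i < m & u i = u m)) => // hne.
exfalso; apply: hnsa => i j hi hj he.
case: (ltngtP i m) => hi1; [|lia|]; case: (ltngtP j m) => hj1; try lia.
- by apply: hsa => //; lia.
- by exfalso; apply: hne; exists i; rewrite // he hj1.
- by exfalso; apply: hne; exists j; rewrite // -he hi1.
Qed.

Lemma not_treelike_lasso x R : ~ treelike g x R ->
  exists2 m, m <= R & exists2 t, t \in lassos m & tfun t 0 = x.
Proof.
move=> hx; case: (pselect (exists2 m, m <= R & exists2 t, t \in lassos m & tfun t 0 = x)) => //.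
move=> hne; exfalso; apply: hx => u k hk u0 hw hn.
case: (pselect (self_avoiding u k)) => // hns; exfalso.
have [m hmk hl] := exists_lasso hw hn hns.
apply: hne; exists m; first lia.
exists [tuple u i | i < m.+1]; last by rewrite tfun_mktuple.
by rewrite inE; apply/asboolP; apply: (eq_lasso _ hl) => i hi; rewrite tfun_mktuple.
Qed.

Lemma card_not_treelike R :
  #|[set x | ~~ `[< treelike g x R >]]| <= \sum_(m < R.+1) nlassos m.
Proof.
apply: (@leq_trans (\sum_(m < R.+1) #|[set tfun t 0 | t in lassos m]|)).
  apply: (card_le_sum_cover (A := fun m => [set tfun t 0 | t in lassos m])) => x; rewrite inE => /asboolP /not_treelike_lasso [m hm [t ht <-]].
  by exists m; [lia|apply/imsetP; exists t].
by apply: leq_sum => m _; exact: leq_imset_card.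
Qed.

Lemma nlassos_gt m : #|V| < m -> nlassos m = 0.
Proof.
move=> hm; apply: eq_card0 => t; rewrite inE; apply/asboolP => [[_ _ hsa _]].
pose F (i : 'I_m) : V := tfun t i.
have : injective F.
  by move=> i j /hsa he; apply: val_inj; apply: he; have := ltn_ord i; have := ltn_ord j; lia.
by move/leq_card; rewrite card_ord; lia.
Qed.

Variable D : nat.
Hypothesis degD : forall x, deg g x <= D.

Definition lasso_prefixed j m :=
  [set t : m.+1.-tuple V | `[< walk g (tfun t) m /\ lasso (tfun t) j >]].

Lemma card_lasso_prefixedS j n :
  j <= n -> #|lasso_prefixed j n.+1| <= D * #|lasso_prefixed j n|.
Proof.
move=> hjn.
pose F (t : n.+2.-tuple V) := ([tuple tfun t i | i < n.+1], tfun t n.+1).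
have inj : injective F.
  move=> t1 t2 E; have /= e1 := congr1 fst E; have /= e2 := congr1 snd E.
  apply: eq_from_tnth => i; rewrite !tnth_tfun.
  case: (ltnP i n.+1) => hi.
    by have := congr1 (fun t : n.+1.-tuple V => tfun t i) e1; rewrite /= !tfun_mktuple.
  by have -> : nat_of_ord i = n.+1 by have := ltn_ord i; lia.
pose Z := [set p : n.+1.-tuple V * V | (p.1 \in lasso_prefixed j n) && g (tfun p.1 n) p.2].
have sub : F @: lasso_prefixed j n.+1 \subset Z.
  apply/subsetP => p /imsetP [t]; rewrite inE => /asboolP [hw hl] ->.
  rewrite inE /= inE tfun_mktuple //; apply/andP; split; last by apply: hw.
  apply/asboolP; split.
    by move=> i hi; rewrite !tfun_mktuple; try lia; apply: hw; lia.
  by apply: (eq_lasso _ hl) => i hi; rewrite tfun_mktuple //; lia.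
rewrite -(card_imset _ inj); apply: leq_trans (subset_leq_card sub) _.
have -> : #|Z| = \sum_t0 \sum_y (((t0, y) \in Z) : nat).
  by rewrite card_sum_mem pair_big; apply: eq_bigr => [[]].
rewrite (card_sum_mem (lasso_prefixed j n)) big_distrr /=.
apply: leq_sum => t0 _; case: (boolP (t0 \in lasso_prefixed j n)) => h.
  rewrite muln1; apply: leq_trans (degD (tfun t0 n)); rewrite /deg card_sum_mem.
  by apply: eq_leq; apply: eq_bigr => y _; rewrite [(_, _) \in Z]inE /= h inE.
by rewrite big1 // => y _; rewrite [(_, _) \in Z]inE /= (negbTE h).
Qed.

Lemma card_lasso_prefixed j k : #|lasso_prefixed j (j + k)| <= D ^ k * nlassos j.
Proof.
elim: k => [|k IH].
  rewrite addn0 mul1n; apply: subset_leq_card; apply/subsetP => t.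
  by rewrite !inE => /asboolP [_ hl]; apply/asboolP.
rewrite addnS expnS -mulnA; apply: leq_trans (card_lasso_prefixedS _) _; first lia.
by rewrite leq_mul2l IH orbT.
Qed.

Definition lasso_extended m :=
  [set t : m.+1.-tuple V | `[< walk g (tfun t) m /\ exists2 j, j < m & lasso (tfun t) j >]].

Lemma card_lasso_extended m : #|lasso_extended m| <= wsum D nlassos m.
Proof.
apply: (@leq_trans (\sum_(j < m) #|lasso_prefixed j m|)).
  apply: (card_le_sum_cover (A := lasso_prefixed^~ m)) => t.
  rewrite inE => /asboolP [hw [j hj hl]].
  by exists j => //; rewrite inE; apply/asboolP.
rewrite /wsum big_mkord; apply: leq_sum => j _.
have hj : j <= m by have := ltn_ord j; lia.
by move: (card_lasso_prefixed j (m - j)); rewrite subnKC.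
Qed.

End Lassos.

(** * Signed 2-lifts *)

Section SignedLift.
Variables (V : finType) (g : rel V).
Hypotheses (gs : symmetric g) (gi : irreflexive g).

Local Notation signing := {ffun V * V -> bool}.

Definition edge_key (x y : V) : V * V :=
  if enum_rank x <= enum_rank y then (x, y) else (y, x).

Lemma edge_keyC x y : edge_key x y = edge_key y x.
Proof.
rewrite /edge_key; case: (ltngtP (enum_rank x) (enum_rank y)) => // /val_inj/enum_rank_inj.
by move=> ->.
Qed.

Lemma edge_key_eq a b c d :
  edge_key a b = edge_key c d -> (a = c /\ b = d) \/ (a = d /\ b = c).
Proof. by rewrite /edge_key; do 2 case: ifP => _; case=> -> ->; auto. Qed.

Definition sign (f : signing) (x y : V) : bool := f (edge_key x y).

Lemma signC f x y : sign f x y = sign f y x.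
Proof. by rewrite /sign edge_keyC. Qed.

Definition signed_lift (f : signing) : rel (V * bool) :=
  fun p q => g p.1 q.1 && (q.2 == p.2 (+) sign f p.1 q.1).

Lemma signed_lift_2lift f : is_2lift g (signed_lift f).
Proof.
split; first split.
- move=> [x a] [y b]; rewrite /signed_lift /= gs signC.
  by case: a; case: b; case: (sign f y x).
- by move=> [x a]; rewrite /signed_lift /= gi.
- move=> x y; rewrite /signed_lift /=; case: (g x y) => //.
  by case: (sign f x y); [right|left] => a b /=; case: a; case: b.
Qed.

Lemma deg_signed_lift f x a : deg (signed_lift f) (x, a) = deg g x.
Proof.
rewrite /deg; have -> : [set w | signed_lift f (x, a) w] =
    [set (y, a (+) sign f x y) | y in [set y | g x y]].
  apply/setP => [[y b]]; rewrite inE /signed_lift /=; apply/idP/imsetP.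
    by case/andP=> h /eqP ->; exists y; rewrite ?inE.
  by case=> y'; rewrite inE => h [-> ->]; rewrite h eqxx.
by rewrite card_imset // => y1 y2 [].
Qed.

Definition walk_sign f (u : nat -> V) i j : bool :=
  \big[addb/false]_(i <= l < j) sign f (u l) (u l.+1).

Lemma signed_lift_walk_bit f (u : nat -> V * bool) m i j :
  walk (signed_lift f) u m -> i <= j -> j <= m ->
  (u j).2 = (u i).2 (+) walk_sign f (fun l => (u l).1) i j.
Proof.
move=> hw hij; elim: j hij => [|j IH] hij hjm.
  have -> : i = 0 by lia.
  by rewrite /walk_sign big_geq // addbF.
case: (ltngtP i j.+1) => h; [|lia|by rewrite h /walk_sign big_geq // addbF].
rewrite /walk_sign big_nat_recr /=; last by lia.
have /andP [_ /eqP ->] := hw j hjm.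
by rewrite (IH _ (ltnW hjm)) ?addbA //; lia.
Qed.

Lemma walk_fst f (u : nat -> V * bool) m :
  walk (signed_lift f) u m -> walk g (fun l => (u l).1) m.
Proof. by move=> hw i hi; case/andP: (hw i hi). Qed.

Lemma nonbacktracking_fst f (u : nat -> V * bool) m :
  walk (signed_lift f) u m -> nonbacktracking u m -> nonbacktracking (fun l => (u l).1) m.
Proof.
move=> hw hn i hi /= he; apply: (hn i hi).
have := signed_lift_walk_bit hw (leqW (leqnSn i)) hi.
rewrite /walk_sign big_nat_recr /= ?big_nat1; last by lia.
rewrite he signC addbb addbF => hb.
by rewrite [u i]surjective_pairing [u i.+2]surjective_pairing hb he.
Qed.

Definition tuple_fst m (t : m.+1.-tuple (V * bool)) : m.+1.-tuple V := [tuple of map fst t].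

Lemma tfun_fst m (t : m.+1.-tuple (V * bool)) : tfun (tuple_fst t) = fun i => (tfun t i).1.
Proof.
apply: funext => i; rewrite /tfun /=.
have -> : thead (tuple_fst t) = (thead t).1.
  by rewrite /thead !(tnth_nth (thead t).1) /= (nth_map (thead t)) ?size_tuple
    // (tnth_nth (thead t)).
case: (ltnP i (size t)) => hi; first by rewrite (nth_map (thead t)).
by rewrite !nth_default ?size_map.
Qed.

(* Lassos of g whose cycle lifts to a closed walk of the lift. *)
Definition even_lassos f m := [set t : m.+1.-tuple V | `[< lasso g (tfun t) m /\
  exists i, [/\ i < m, tfun t i = tfun t m & walk_sign f (tfun t) i m = false] >]].

Lemma lift_lasso_fst f m t : t \in lassos (signed_lift f) m ->
  tuple_fst t \in even_lassos f m :|: lasso_extended g m.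
Proof.
rewrite inE => /asboolP hl; case: (hl) => hw hn _ hnsa; rewrite in_setU !inE tfun_fst.
have hwu := walk_fst hw; have hnu := nonbacktracking_fst hw hn.
case: (pselect (self_avoiding (fun l => (tfun t l).1) m.-1)) => hs.
- apply/orP; left; apply/asboolP; split.
    split => // hs'; apply: hnsa => i j hi hj he; apply: hs' => //=.
    by rewrite he.
  have [i hi he] := lasso_cycle_start hl; exists i; split => //; first by rewrite he.
  by move: (signed_lift_walk_bit hw (ltnW hi) (leqnn m)); rewrite he; case: walk_sign;
    case: (tfun t m).2.
- apply/orP; right; apply/asboolP; split => //.
  have hm : 0 < m by case: (posnP m) => // hm0; exfalso; apply: hs => i j; lia.
  case: (exists_lasso (g := g) (k := m.-1) (u := fun l => (tfun t l).1)) => //.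
  + by move=> i hi; apply: hwu; lia.
  + by move=> i hi; apply: hnu; lia.
  + by move=> j hj hlj; exists j => //; lia.
Qed.

Lemma lift_lasso_inj f m :
  {in lassos (signed_lift f) m &, injective (fun t => (tuple_fst t, (tfun t 0).2))}.
Proof.
move=> t1 t2; rewrite !inE => /asboolP [hw1 _ _ _] /asboolP [hw2 _ _ _] [hp hb].
have e1 : tfun (tuple_fst t1) = tfun (tuple_fst t2) by congr tfun; exact: val_inj.
rewrite !tfun_fst in e1.
apply: eq_from_tnth => j; rewrite !tnth_tfun.
have hj : j <= m by have := ltn_ord j; lia.
rewrite [tfun t1 j]surjective_pairing [tfun t2 j]surjective_pairing.
rewrite (signed_lift_walk_bit hw1 (leq0n j) hj) (signed_lift_walk_bit hw2 (leq0n j) hj) hb e1.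
by have /= -> := congr1 (fun h : nat -> V => h (nat_of_ord j)) e1.
Qed.

Lemma nlassos_signed_lift f m :
  nlassos (signed_lift f) m <= 2 * (#|even_lassos f m| + #|lasso_extended g m|).
Proof.
have sub : [set (tuple_fst t, (tfun t 0).2) | t in lassos (signed_lift f) m]
    \subset setX (even_lassos f m :|: lasso_extended g m) setT.
  by apply/subsetP => p /imsetP [t /lift_lasso_fst ht ->]; rewrite in_setX ht in_setT.
rewrite /nlassos -(card_in_imset (lift_lasso_inj (f := f) (m := m))).
apply: leq_trans (subset_leq_card sub) _.
by rewrite cardsX cardsT card_bool cardsU; lia.
Qed.

Lemma lasso_cycle_key (u : nat -> V) m i0 l : lasso g u m -> i0 < m -> u i0 = u m ->
  i0 < l < m -> edge_key (u l) (u l.+1) != edge_key (u i0) (u i0.+1).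
Proof.
case=> hw hn hsa _ hi0 he /andP [hl1 hl2]; apply/eqP => /edge_key_eq [[e1 e2]|[e1 e2]].
  by have := hsa l i0 ltac:(lia) ltac:(lia) e1; lia.
have el : l = i0.+1 by apply: hsa; [lia|lia|exact: e1].
subst l; case: (ltngtP i0.+2 m) => h2; [|lia|].
  by have := hsa i0.+2 i0 ltac:(lia) ltac:(lia) e2; lia.
by apply: (hn i0); [lia|rewrite -e2].
Qed.

Definition flip_sign (c : V * V) (f : signing) : signing := [ffun x => f x (+) (x == c)].

Lemma flip_signK c : involutive (flip_sign c).
Proof. by move=> f; apply/ffunP => x; rewrite !ffunE -addbA addbb addbF. Qed.

Lemma walk_sign_flip c f u i j : walk_sign (flip_sign c f) u i j =
  walk_sign f u i j (+) \big[addb/false]_(i <= l < j) (edge_key (u l) (u l.+1) == c).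
Proof. by rewrite /walk_sign -big_split /=; apply: eq_bigr => l _; rewrite /sign ffunE. Qed.

Lemma card_half_involution (T : finType) (P : pred T) (h : T -> T) :
  involutive h -> (forall x, P (h x) = ~~ P x) -> #|[set x | P x]| * 2 = #|T|.
Proof.
move=> hK hP; have e : h @: [set x | P x] = ~: [set x | P x].
  apply/setP => x; rewrite !inE; apply/imsetP/idP => [[y]|hx].
    by rewrite inE => hy ->; rewrite hP hy.
  by exists (h x); rewrite ?inE ?hP ?hK.
by rewrite muln2 -addnn {2}(_ : #|_| = #|~: [set x | P x]|) ?cardsC // -e card_imset //;
  exact: can_inj hK.
Qed.

(* Flipping the sign of the edge closing the cycle changes the parity of the
   cycle and of nothing else, so each lasso is even for half of the signings. *)
Lemma sum_card_even_lassos m :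
  \sum_(f : signing) #|even_lassos f m| * 2 = #|signing| * nlassos g m.
Proof.
rewrite -big_distrl /= (eq_bigr (fun f => \sum_t (t \in even_lassos f m))); last first.
  by move=> f _; rewrite card_sum_mem.
rewrite exchange_big /= big_distrl /= /nlassos card_sum_mem big_distrr /=.
apply: eq_bigr => t _; case: (boolP (t \in lassos g m)) => ht; last first.
  rewrite muln0 big1 // => f _; case: (boolP (t \in even_lassos f m)) => // hs.
  by move: hs ht; rewrite !inE => /asboolP [hl _] /asboolP [].
move: (ht); rewrite muln1 inE => /asboolP hl.
have [i0 hi0 he0] := lasso_cycle_start hl; case: (hl) => _ _ hsa _.
have eS f : (t \in even_lassos f m) = ~~ walk_sign f (tfun t) i0 m.
  rewrite inE; apply/asboolP/idP => [[_ [i [hi he hs]]]|hs].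
    have ei : i = i0 by apply: hsa; [lia|lia|rewrite he he0].
    by rewrite -ei hs.
  by split => //; exists i0; split => //; apply/negbTE.
rewrite (eq_bigr (fun f => (f \in [set f | ~~ walk_sign f (tfun t) i0 m]) : nat)); last first.
  by move=> f _; rewrite inE eS.
rewrite -card_sum_mem (card_half_involution (flip_signK (edge_key (tfun t i0) (tfun t i0.+1)))) //.
move=> f; rewrite walk_sign_flip big_ltn // eqxx big_nat_cond big1 ?addbF ?addbT //.
by move=> l /andP [hl' _]; apply/negbTE; exact: (lasso_cycle_key hl hi0 he0 hl').
Qed.

End SignedLift.

(** * The potential *)

Lemma wsum_potential_step Q D L K :
  4 * D <= Q -> 3 * wsum Q (wsum D L) K + 4 * wsum D L K <= wsum Q L K.
Proof.
move=> hQ; elim: K => [|K IH]; first by rewrite /wsum !big_geq.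
rewrite !wsumS; set T := wsum Q _ K in IH *; set A := wsum D L K in IH *.
have h1 : Q * (3 * T + 4 * A) <= Q * wsum Q L K by rewrite leq_mul2l IH orbT.
have h2 : 4 * D * A <= Q * A by rewrite leq_mul2r hQ orbT.
have h3 : 4 * D * L K <= Q * L K by rewrite leq_mul2r hQ orbT.
nia.
Qed.

(* #|W|.+1 exceeds the length of every lasso of h (see [nlassos_gt]). *)
Definition potential Q (W : finType) (h : rel W) : nat := wsum Q (nlassos h) #|W|.+1.

Definition best_signing Q (W : finType) (h : rel W) : {ffun W * W -> bool} :=
  [arg min_(f < [ffun => false]) potential Q (signed_lift h f)].

Section BestSigning.
Variables (V : finType) (g : rel V) (D Q : nat).
Hypotheses (degD : forall x, deg g x <= D) (hQ : 4 * D <= Q).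

Local Notation signing := {ffun V * V -> bool}.

Lemma sum_nlassos_signed_lift m :
  \sum_(f : signing) nlassos (signed_lift g f) m <=
  #|signing| * (nlassos g m + 2 * wsum D (nlassos g) m).
Proof.
apply: (@leq_trans (\sum_(f : signing) 2 * (#|even_lassos g f m| + #|lasso_extended g m|))).
  by apply: leq_sum => f _; exact: nlassos_signed_lift.
have eX : \sum_(f : signing) #|lasso_extended g m| = #|signing| * #|lasso_extended g m|.
  by rewrite sum_nat_const.
rewrite -big_distrr /= big_split /= eX.
have hE : (\sum_(f : signing) #|even_lassos g f m|) * 2 = #|signing| * nlassos g m.
  by rewrite big_distrl; exact: sum_card_even_lassos.
have hX : #|signing| * #|lasso_extended g m| <= #|signing| * wsum D (nlassos g) m.
  by rewrite leq_mul2l card_lasso_extended ?orbT.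
set F := #|signing| in hE hX *; set S := \sum_(f : signing) _ in hE *; lia.
Qed.

Lemma sum_potential_signed_lift K :
  3 * \sum_(f : signing) wsum Q (nlassos (signed_lift g f)) K <=
  5 * #|signing| * wsum Q (nlassos g) K.
Proof.
have -> : \sum_(f : signing) wsum Q (nlassos (signed_lift g f)) K =
    \sum_(0 <= m < K) Q ^ (K - m) * \sum_(f : signing) nlassos (signed_lift g f) m.
  by rewrite /wsum exchange_big /=; apply: eq_bigr => m _; rewrite big_distrr.
have h1 : \sum_(0 <= m < K) Q ^ (K - m) * \sum_(f : signing) nlassos (signed_lift g f) m <=
    #|signing| * (wsum Q (nlassos g) K + 2 * wsum Q (wsum D (nlassos g)) K).
  apply: (@leq_trans (\sum_(0 <= m < K) #|signing| *
      (Q ^ (K - m) * nlassos g m + 2 * (Q ^ (K - m) * wsum D (nlassos g) m)))).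
    apply: leq_sum => m _.
    have -> : #|signing| * (Q ^ (K - m) * nlassos g m + 2 * (Q ^ (K - m) *
        wsum D (nlassos g) m)) = Q ^ (K - m) * (#|signing| * (nlassos g m + 2 *
        wsum D (nlassos g) m)) by lia.
    by rewrite leq_mul2l sum_nlassos_signed_lift orbT.
  by rewrite -big_distrr /= big_split /= -big_distrr.
have h2 := wsum_potential_step (nlassos g) K hQ.
nia.
Qed.

Lemma wsum_nlassos_ext k : wsum Q (nlassos g) (#|V|.+1 + k) = Q ^ k * potential Q g.
Proof.
elim: k => [|k IH]; first by rewrite addn0 mul1n.
by rewrite addnS wsumS IH nlassos_gt ?addn0 ?expnS ?mulnA //; lia.
Qed.

(* Averaging over all signings: the best one does at least as well as the mean. *)
Lemma best_signing_potential :
  3 * potential Q (signed_lift g (best_signing Q g)) <= 5 * Q ^ #|V| * potential Q g.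
Proof.
have hmin f : potential Q (signed_lift g (best_signing Q g)) <= potential Q (signed_lift g f).
  by rewrite /best_signing; case: arg_minnP => // f0 _; apply.
have hF : 0 < #|signing| by apply/card_gt0P; exists [ffun => false].
have hc : #|{: V * bool}|.+1 = #|V|.+1 + #|V| by rewrite card_prod card_bool; lia.
have hs := sum_potential_signed_lift #|{: V * bool}|.+1.
rewrite {2}hc wsum_nlassos_ext in hs.
have h1 : #|signing| * potential Q (signed_lift g (best_signing Q g)) <=
    \sum_(f : signing) potential Q (signed_lift g f).
  by rewrite -sum_nat_const; apply: leq_sum => f _; exact: hmin.
rewrite -(leq_pmul2l hF); apply: leq_trans (_ : 3 * \sum_(f : signing)
    potential Q (signed_lift g f) <= _).
  by rewrite mulnCA leq_mul2l h1 orbT.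
by apply: leq_trans hs _; apply: eq_leq; rewrite /potential; lia.
Qed.

End BestSigning.

(** * The tower of lifts *)

Lemma exp56_bound i : 5 ^ i * (5 + i) <= 5 * 6 ^ i.
Proof.
elim: i => [|i IH] //; rewrite !expnS.
have : 5 ^ i * (5 * (5 + i.+1)) <= 5 ^ i * (6 * (5 + i)) by rewrite leq_mul2l; lia.
lia.
Qed.

(* Via 5^i (5 + i) <= 5 * 6^i: a ratio (5/6)^i is at most 5 / (5 + i). *)
Lemma geometric_tail B n C i :
  B * 3 ^ i <= C * 5 ^ i -> 2 ^ i <= n -> B * (5 + i) <= 5 * C * n.
Proof.
move=> h1 h2; rewrite -(@leq_pmul2l (5 ^ i)) ?expn_gt0 //.
have s1 : 5 ^ i * (B * (5 + i)) <= B * (5 * (3 ^ i * 2 ^ i)).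
  by rewrite -expnMn mulnCA leq_mul2l exp56_bound orbT.
have s2 : B * (5 * (3 ^ i * 2 ^ i)) <= 5 * (C * 5 ^ i) * n.
  by have := leq_mul (leq_mul (leqnn 5) h1) h2; lia.
lia.
Qed.

Section Proportions.
Local Open Scope ring_scope.
Import Order.TTheory Num.Theory GRing.Theory.

Lemma ratio_tends_to0 (B n : nat -> nat) (C N0 : nat) :
  (forall i, (N0 <= i)%N -> (B i * 3 ^ i <= C * 5 ^ i)%N) -> (forall i, (2 ^ i <= n i)%N) ->
  forall eps : rat, 0 < eps ->
  exists N, forall i, (N <= i)%N -> (B i)%:R / (n i)%:R < eps.
Proof.
move=> hB hn eps he; exists (maxn N0 (Num.bound ((5 * C)%N%:R / eps))) => i.
rewrite geq_max => /andP [hi0 hi1].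
have hn0 : (0 < n i)%N by apply: leq_trans (hn i); rewrite expn_gt0.
have hb : (5 * C)%N%:R < eps * (5 + i)%N%:R :> rat.
  rewrite mulrC -ltr_pdivrMr //; apply: lt_le_trans (archi_boundP _) _.
    by rewrite divr_ge0 ?ler0n // ltW.
  by rewrite ler_nat (leq_trans hi1) ?leq_addl.
have hBn : (B i)%:R * (5 + i)%N%:R <= (5 * C)%N%:R * (n i)%:R :> rat.
  by rewrite -!natrM ler_nat; exact: geometric_tail (hB i hi0) (hn i).
rewrite ltr_pdivrMr ?ltr0n // -(@ltr_pM2r _ (5 + i)%N%:R) ?ltr0n //.
by apply: le_lt_trans hBn _; rewrite mulrAC ltr_pM2r ?ltr0n.
Qed.

Lemma dist_proportion1 (W : finType) (P : pred W) : (0 < #|W|)%N ->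
  `|proportion P - 1| = #|[set x | ~~ P x]|%:R / #|W|%:R.
Proof.
move=> hW; rewrite /proportion.
have hc : #|W| = (#|[set x | P x]| + #|[set x | ~~ P x]|)%N.
  by rewrite -(cardsC [set x | P x]); congr (_ + _)%N; apply: eq_card => x; rewrite !inE.
have hn : #|W|%:R != 0 :> rat by rewrite pnatr_eq0 -lt0n.
have -> : #|[set x | P x]|%:R / #|W|%:R - 1 = - (#|[set x | ~~ P x]|%:R / #|W|%:R) :> rat.
  by apply: (mulIf hn); rewrite mulrBl mulNr !mulfVK // mul1r hc natrD; ring.
by rewrite normrN ger0_norm // divr_ge0 // ler0n.
Qed.

End Proportions.

Lemma card_liftT (T : finType) i : #|liftT T i| = 2 ^ i * #|T|.
Proof.
elim: i => [|i IH]; first by rewrite mul1n.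
by rewrite /= card_prod card_bool IH expnS mulnC mulnA.
Qed.

Section Tower.
Variables (T : finType) (e : rel T).
Hypotheses (es : symmetric e) (ei : irreflexive e).
Variable D : nat.
Hypothesis degD : forall x, deg e x <= D.

Let Q := 4 * D.+1.

Fixpoint lift_tower (i : nat) : rel (liftT T i) :=
  match i as n return rel (liftT T n) with
  | 0 => e
  | i'.+1 => signed_lift (@lift_tower i') (best_signing Q (@lift_tower i'))
  end.
Arguments lift_tower : clear implicits.

Lemma lift_tower_simple i : symmetric (lift_tower i) /\ irreflexive (lift_tower i).
Proof.
elim: i => [|i [IH1 IH2]] //.
by case: (signed_lift_2lift IH1 IH2 (best_signing Q (lift_tower i))) => [[]].
Qed.

Lemma lift_tower_2lift i : is_2lift (lift_tower i) (lift_tower i.+1).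
Proof. by case: (lift_tower_simple i) => h1 h2; exact: signed_lift_2lift. Qed.

Lemma deg_lift_tower i (x : liftT T i.+1) : deg (lift_tower i.+1) x = deg (lift_tower i) x.1.
Proof. by case: x => y b; exact: deg_signed_lift. Qed.

Lemma lift_tower_degD i x : deg (lift_tower i) x <= D.
Proof. by elim: i x => [|i IH] x; rewrite ?deg_lift_tower. Qed.

Lemma potential_tower i : 3 ^ i * Q ^ #|T| * potential Q (lift_tower i) <=
  5 ^ i * Q ^ #|liftT T i| * potential Q e.
Proof.
elim: i => [|i IH]; first by rewrite !mul1n.
have hs := best_signing_potential (@lift_tower_degD i) (_ : 4 * D <= Q).
have e2 : Q ^ #|liftT T i.+1| = Q ^ #|liftT T i| * Q ^ #|liftT T i|.
  by rewrite -expnD /= card_prod card_bool muln2 addnn.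
rewrite e2 !expnS; set q := Q ^ #|liftT T i|.
apply: (@leq_trans (5 * q * (3 ^ i * Q ^ #|T| * potential Q (lift_tower i)))).
  rewrite [X in X <= _](_ : _ = 3 ^ i * Q ^ #|T| * (3 * potential Q (lift_tower i.+1))); last ring.
  rewrite (_ : 5 * q * _ = 3 ^ i * Q ^ #|T| * (5 * q * potential Q (lift_tower i))); last ring.
  by rewrite leq_mul2l hs ?orbT //; rewrite /Q; lia.
rewrite [X in _ <= X](_ : _ = 5 * q * (5 ^ i * q * potential Q e)); last ring.
by rewrite leq_mul2l IH orbT.
Qed.

Variable r : nat.
Let R := r.+1 + r.+1.

Definition not_treelike i := [set x : liftT T i | ~~ `[< treelike (lift_tower i) x R >]].

Lemma card_not_treelike_potential i : R <= #|liftT T i| ->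
  Q ^ #|liftT T i|.+1 * #|not_treelike i| <= Q ^ R * potential Q (lift_tower i).
Proof.
move=> hR; set K := #|liftT T i|.+1.
apply: leq_trans (leq_mul (leqnn _) (card_not_treelike _ R)) _.
rewrite -(big_mkord xpredT) big_distrr /potential /wsum -/K big_distrr /=.
rewrite [X in _ <= X](big_cat_nat _ (n := R.+1)) //=.
apply: leq_trans (leq_addr _ _); rewrite big_nat_cond [X in _ <= X]big_nat_cond.
apply: leq_sum => m /andP [/andP [_ hm] _].
rewrite mulnA leq_mul2r -expnD; apply/orP; right.
by apply: leq_pexp2l; rewrite /Q; lia.
Qed.

Lemma card_not_treelike_tower i :
  0 < #|T| -> R <= i -> #|not_treelike i| * 3 ^ i <= Q ^ R * potential Q e * 5 ^ i.
Proof.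
move=> hT hi; have hR : R <= #|liftT T i|.
  rewrite card_liftT; apply: leq_trans hi _; apply: leq_trans (ltnW (ltn_expl i (ltnSn 1))) _.
  by rewrite leq_pmulr.
have h1 := card_not_treelike_potential hR; have h2 := potential_tower i.
set q := Q ^ #|liftT T i| in h1 h2.
have hQ : 0 < Q by rewrite /Q.
have hq : 0 < q by rewrite expn_gt0 hQ.
have hqT : 0 < Q ^ #|T| by rewrite expn_gt0 hQ.
rewrite expnS in h1; rewrite -(leq_pmul2l hq).
have h3 := leq_mul (leqnn (3 ^ i * Q ^ #|T|)) h1.
have h4 := leq_mul (leqnn (Q ^ R)) h2.
have h5 : q * (#|not_treelike i| * 3 ^ i) <= Q ^ #|T| * Q * (q * (#|not_treelike i| * 3 ^ i)).
  by apply: leq_pmull; rewrite muln_gt0 hqT hQ.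
nia.
Qed.

Lemma lift_tower_tends_to_one (P : forall i, pred (liftT T i)) :
  0 < #|T| -> (forall i x, treelike (lift_tower i) x R -> P i x) ->
  tends_to_one (fun i => proportion (P i)).
Proof.
move=> hT hP eps he.
have hB i : R <= i -> #|[set x | ~~ P i x]| * 3 ^ i <= Q ^ R * potential Q e * 5 ^ i.
  move=> hi; apply: leq_trans (card_not_treelike_tower hT hi); rewrite leq_mul2r; apply/orP; right.
  apply: subset_leq_card; apply/subsetP => x; rewrite !inE; apply: contra => /asboolP.
  exact: hP.
have hn i : 2 ^ i <= #|liftT T i| by rewrite card_liftT leq_pmulr.
have [N hN] := ratio_tends_to0 hB hn he; exists N => i hi.
by rewrite dist_proportion1 ?hN // card_liftT muln_gt0 expn_gt0.
Qed.

End Tower.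

Arguments lift_tower {T} e D i.

Lemma regular_lift_tower (T : finType) (e : rel T) D d i :
  regular e d -> regular (lift_tower e D i) d.
Proof. by move=> hr; elim: i => [|i IH] //= x; rewrite deg_lift_tower IH. Qed.

Lemma biregular_lift_tower (T : finType) (e : rel T) D a b i :
  biregular_bipartite e a b -> biregular_bipartite (lift_tower e D i) a b.
Proof.
move=> hb; elim: i => [|i [A [h1 [h2 h3]]]] //.
exists [set x : liftT T i.+1 | x.1 \in A]; split; [|split].
- by move=> [u x] [w y]; rewrite !inE /= /signed_lift /= => /andP [/h1].
- by move=> x; rewrite inE deg_lift_tower; exact: h2.
- by move=> x; rewrite inE deg_lift_tower; exact: h3.
Qed.

Lemma BS_conv_Td_lift_tower (T : finType) (e : rel T) d :
  0 < #|T| -> simple_graph e -> regular e d -> BS_conv_Td (lift_tower e d) d.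
Proof.
move=> hT [es ei] hr r _.
have degD x : deg e x <= d by rewrite hr.
apply: (lift_tower_tends_to_one (r := r) degD) => // i x hx; apply/asboolP.
have [gs gi] := lift_tower_simple es ei d i.
apply: (treelike_ball_iso_tree gs gi _ hx) => s.
by apply: size_succs_regular => //; exact: regular_lift_tower.
Qed.

Lemma BS_conv_Tab_lift_tower (T : finType) (e : rel T) a b :
  0 < #|T| -> simple_graph e -> biregular_bipartite e a b ->
  BS_conv_Tab (lift_tower e (maxn a b)) a b.
Proof.
move=> hT [es ei] hb r _.
have degD x : deg e x <= maxn a b.
  case: hb => A [_ [degA degB]]; have [xA|xA] := boolP (x \in A).
    by rewrite degA ?leq_maxl.
  by rewrite degB ?leq_maxr.
apply: (lift_tower_tends_to_one (r := r) degD) => // i x hx; apply/asboolP.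
have [gs gi] := lift_tower_simple es ei (maxn a b) i.
have [A [hA [degA degB]]] := biregular_lift_tower (maxn a b) i hb.
have [xA|xA] := boolP (x \in A); [left|right]; split; [exact: degA| |exact: degB|].
  apply: (treelike_ball_iso_tree gs gi _ hx) => s.
  exact: (size_succs_biregular gs gi hA degA degB xA).
apply: (treelike_ball_iso_tree gs gi _ hx) => s.
apply: (@size_succs_biregular _ _ gs gi _ (~: A)); rewrite ?inE //.
- by move=> u w /hA; rewrite !inE; case: (u \in A); case: (w \in A).
- by move=> y; rewrite inE; exact: degB.
- by move=> y; rewrite inE negbK; exact: degA.
Qed.

Theorem corollary4p5 :
  (forall (T : finType) (e : rel T) (d : nat),
     (0 < #|T|)%N -> simple_graph e -> regular e d ->
     exists G : forall i : nat, rel (liftT T i),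
       [/\ G 0%N = e,
           (forall i : nat, is_2lift (G i) (G i.+1))
         & BS_conv_Td G d]) /\
  (forall (T : finType) (e : rel T) (a b : nat),
     (0 < #|T|)%N -> simple_graph e -> biregular_bipartite e a b ->
     exists G : forall i : nat, rel (liftT T i),
       [/\ G 0%N = e,
           (forall i : nat, is_2lift (G i) (G i.+1))
         & BS_conv_Tab G a b]).
Proof.
split=> [T e d hT he hr|T e a b hT he hb]; have [es ei] := he.
  exists (lift_tower e d); split => //; first exact: lift_tower_2lift.
  exact: BS_conv_Td_lift_tower.
exists (lift_tower e (maxn a b)); split => //; first exact: lift_tower_2lift.
exact: BS_conv_Tab_lift_tower.
Qed.
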